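(* Let $s,t\ge 0$, $r\in\mathbb R$, $\alpha,\beta\in\mathbb R$, and let $$B=\exp\!\big(r p_0+t\,R_{\beta/2}\,p_1\,R_{-\beta/2}\big)\exp\!\big(s\,R_\alpha f_1 R_{-\alpha}\big)\in\mathrm{SL}_3(\mathbb R),$$ where $p_0=\mathrm{diag}(2,-1,-1)$, $p_1=\mathrm{diag}(0,\tfrac12,-\tfrac12)$, $f_1=\begin{pmatrix}0&1&0\\1&0&0\\0&0&0\end{pmatrix}$. Let $\rho\in\hom_0(\mathrm{PSL}_2(\mathbb Z),\mathrm{Isom}(X))$ be given by $\rho(a)([M])=[BB^TM^*]$ and $\rho(b)([M])=[R_{2\pi/3}M]$, and set $\vartheta=2\alpha-\beta$. Then $$\mathrm{tr}(\rho(baba))=\mathrm{tr}(\rho(baba)^{-1})=-\tfrac32\cosh(2s)\cosh(2t)+\tfrac94\cosh^2(2s)-\tfrac34-3\sin^2(\vartheta)\sinh^4(s)\sinh^2(t).$$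
   Context: $X=\mathrm{SL}_3(\mathbb R)/\mathrm{SO}(3)$; $\mathrm{SL}_3(\mathbb R)$ acts by $[M]\mapsto[gM]$ and orientation-preserving isometries are identified with matrices in $\mathrm{SL}_3(\mathbb R)$; $M^*=(M^{-1})^T$, and $[M]\mapsto[BB^TM^*]$ is the inversion at $[B]$. $R_\theta=\begin{pmatrix}1&0&0\\0&\cos\theta&-\sin\theta\\0&\sin\theta&\cos\theta\end{pmatrix}$ and $\exp$ is the matrix exponential. $\mathrm{PSL}_2(\mathbb Z)=\langle a,b\mid a^2=b^3=1\rangle$; $\hom_0(\mathrm{PSL}_2(\mathbb Z),\mathrm{Isom}(X))$ is the set of homomorphisms with $\rho(a)$ an inversion and $\rho(b)$ conjugate to $[M]\mapsto[R_{2\pi/3}M]$. *)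

From mathcomp Require Import all_boot all_order all_algebra.
From mathcomp Require Import all_classical all_reals all_analysis.
Set Implicit Arguments. Unset Strict Implicit. Unset Printing Implicit Defensive.
Import Order.TTheory GRing.Theory Num.Theory numFieldNormedType.Exports.
Local Open Scope ring_scope.

Section Defs.
Variable R : realType.

Definition mx3 (l : seq (seq R)) : 'M[R]_3 :=
  \matrix_(i < 3, j < 3) nth 0 (nth [::] l i) j.

Definition mexp (A : 'M[R]_3) : 'M[R]_3 :=
  \matrix_(i, j) limn (fun n : nat => (\sum_(k < n) (k`!%:R)^-1 *: A ^+ k) i j).

Definition coshR (x : R) : R := (expR x + expR (- x)) / 2.
Definition sinhR (x : R) : R := (expR x - expR (- x)) / 2.

Definition Rot (th : R) : 'M[R]_3 :=
  mx3
    [:: [:: 1; 0; 0];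
        [:: 0; cos th; - sin th];
        [:: 0; sin th; cos th]].

Definition p0 : 'M[R]_3 := mx3
    [:: [:: 2; 0; 0]; [:: 0; -1; 0]; [:: 0; 0; -1]].
Definition p1 : 'M[R]_3 := mx3
    [:: [:: 0; 0; 0]; [:: 0; 2^-1; 0]; [:: 0; 0; - 2^-1]].
Definition f1 : 'M[R]_3 := mx3
    [:: [:: 0; 1; 0]; [:: 1; 0; 0]; [:: 0; 0; 0]].

Definition mstar (M : 'M[R]_3) : 'M[R]_3 := (invmx M)^T.

Definition SL3 (M : 'M[R]_3) : Prop := \det M = 1.
Definition SO3 (K : 'M[R]_3) : Prop := K^T *m K = 1%:M /\ \det K = 1.

(* X = SL3(R)/SO(3): [M] = [N] iff N = M K for some K in SO(3) *)
Definition sameX (M N : 'M[R]_3) : Prop := exists K, SO3 K /\ N = M *m K.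

Definition rho_a (B M : 'M[R]_3) : 'M[R]_3 := B *m B^T *m mstar M.
Definition rho_b (M : 'M[R]_3) : 'M[R]_3 := Rot (2 * pi / 3) *m M.

Definition rho_baba (B M : 'M[R]_3) : 'M[R]_3 :=
  rho_b (rho_a B (rho_b (rho_a B M))).

(* g in SL3 is (identified with) the isometry rho(baba): [M] |-> [g M] *)
Definition represents_baba (B g : 'M[R]_3) : Prop :=
  SL3 g /\ forall M, SL3 M -> sameX (rho_baba B M) (g *m M).

Definition Bmat (r s t al be : R) : 'M[R]_3 :=
  mexp (r *: p0 + t *: (Rot (be / 2) *m p1 *m Rot (- (be / 2))))
  *m mexp (s *: (Rot al *m f1 *m Rot (- al))).

End Defs.

From mathcomp Require Import all_boot all_order all_algebra.
From mathcomp Require Import all_classical all_reals all_analysis.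
From mathcomp Require Import ring lra.
Set Implicit Arguments. Unset Strict Implicit. Unset Printing Implicit Defensive.
Import Order.TTheory GRing.Theory Num.Theory numFieldNormedType.Exports.
Local Open Scope ring_scope.

(* Up to conjugation by [Rot (be / 2)], [B] is [D *m Rot phi *m h *m Rot (- phi)] with
   [D] diagonal, [h = mexp (s *: f1)] a hyperbolic rotation of the (e1, e2)-plane and
   [phi = al - be / 2].  As [M |-> M^*] is multiplicative, fixes rotations and sends the
   symmetric [P = B B^T] to [P^-1], the isometry rho(baba) is [M |-> W P W P^-1 M] with
   [W = Rot (2 pi / 3)], and this matrix is the only one representing it, because an
   element of SO(3) commuting with every [M M^T] is the identity.  The inverse
   [P W^-1 P^-1 W^-1] has the trace of [W^-1 P W^-1 P^-1], and [W^-1] has the same cosine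
   [-1/2] as [W]; both traces are then an explicit rational function of [exp t],
   [cosh 2s] and [sin (2 phi)]. *)

Section SquareMatrices.
Variables (R : comUnitRingType) (n : nat).
Implicit Types A B K L M P Q W X : 'M[R]_n.

Lemma invmx_eq A X : A *m X = 1%:M -> invmx A = X.
Proof.
move=> AX; have [Au _] := mulmx1_unit AX.
by rewrite -[invmx A]mulmx1 -AX mulmxA mulVmx // mul1mx.
Qed.

Lemma mulmx_conj P Q A B : Q *m P = 1%:M ->
  (P *m A *m Q) *m (P *m B *m Q) = P *m (A *m B) *m Q.
Proof. by move=> QP; rewrite !mulmxA -(mulmxA _ Q) QP mulmx1. Qed.

Lemma mxtrace_conj P Q A : Q *m P = 1%:M -> \tr (P *m A *m Q) = \tr A.
Proof. by move=> QP; rewrite mxtrace_mulC mulmxA QP mul1mx. Qed.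

Lemma mxtrace_invmx_baba W W' P : W *m W' = 1%:M -> P \in unitmx ->
  \tr (invmx (W *m P *m W *m invmx P)) = \tr (W' *m P *m W' *m invmx P).
Proof.
move=> WW' Pu; rewrite (@invmx_eq _ (P *m W' *m invmx P *m W')); last first.
  rewrite !mulmxA -(mulmxA _ (invmx P) P) mulVmx // mulmx1 -(mulmxA _ W) WW' mulmx1.
  by rewrite -(mulmxA _ P) mulmxV // mulmx1 WW'.
by rewrite mxtrace_mulC !mulmxA.
Qed.

Lemma orthogonal_intertwine_comm K L M :
  K^T *m K = 1%:M -> L^T *m L = 1%:M -> K *m M = M *m L ->
  K *m (M *m M^T) = (M *m M^T) *m K.
Proof.
move=> oK oL KM; have oLT : L *m L^T = 1%:M by apply: mulmx1C.
have MT : M^T = L *m M^T *m K^T.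
  by rewrite -mulmxA -trmx_mul KM trmx_mul mulmxA oLT mul1mx.
by rewrite {2}MT !mulmxA -KM -!mulmxA oK mulmx1.
Qed.

End SquareMatrices.

Section ExplicitMatrices.
Variable R : realType.
Implicit Types a b c d e f g h i x : R.

Definition M3 a b c d e f g h i : 'M[R]_3 :=
  mx3 [:: [:: a; b; c]; [:: d; e; f]; [:: g; h; i]].

Local Ltac entrywise := apply/matrixP => -[[|[|[|//]]] ?] -[[|[|[|//]]] ?];
  rewrite /M3 /mx3 !mxE ?big_ord_recl ?big_ord0 ?mxE /= ?mxE /=.

Lemma M3_mul a b c d e f g h i a' b' c' d' e' f' g' h' i' :
  M3 a b c d e f g h i *m M3 a' b' c' d' e' f' g' h' i' =
  M3 (a*a'+b*d'+c*g') (a*b'+b*e'+c*h') (a*c'+b*f'+c*i')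
     (d*a'+e*d'+f*g') (d*b'+e*e'+f*h') (d*c'+e*f'+f*i')
     (g*a'+h*d'+i*g') (g*b'+h*e'+i*h') (g*c'+h*f'+i*i').
Proof. by entrywise; rewrite ?addr0 ?addrA. Qed.

Lemma tr_M3 a b c d e f g h i : (M3 a b c d e f g h i)^T = M3 a d g b e h c f i.
Proof. by entrywise. Qed.

Lemma mxtrace_M3 a b c d e f g h i : \tr (M3 a b c d e f g h i) = a + e + i.
Proof. by rewrite /mxtrace !big_ord_recl big_ord0 /M3 /mx3 !mxE /= addr0 addrA. Qed.

Lemma det_M3 a b c d e f g h i : \det (M3 a b c d e f g h i) =
  a * (e * i - f * h) - b * (d * i - f * g) + c * (d * h - e * g).
Proof.
rewrite (expand_det_row _ 0) !big_ord_recl big_ord0 /cofactor.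
rewrite !(expand_det_row _ 0) !big_ord_recl !big_ord0 /cofactor !det_mx11.
by rewrite /M3 /mx3 !mxE /bump /=; ring.
Qed.

Lemma M3_1 : 1%:M = M3 1 0 0 0 1 0 0 0 1.
Proof. by entrywise. Qed.

Lemma M3_add a b c d e f g h i a' b' c' d' e' f' g' h' i' :
  M3 a b c d e f g h i + M3 a' b' c' d' e' f' g' h' i' =
  M3 (a+a') (b+b') (c+c') (d+d') (e+e') (f+f') (g+g') (h+h') (i+i').
Proof. by entrywise. Qed.

Lemma M3_scale x a b c d e f g h i :
  x *: M3 a b c d e f g h i = M3 (x*a) (x*b) (x*c) (x*d) (x*e) (x*f) (x*g) (x*h) (x*i).
Proof. by entrywise. Qed.

Lemma M3E (A : 'M[R]_3) :
  A = M3 (A 0 0) (A 0 1) (A 0 2) (A 1 0) (A 1 1) (A 1 2) (A 2 0) (A 2 1) (A 2 2).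
Proof.
apply/matrixP => -[[|[|[|//]]] ?] -[[|[|[|//]]] ?]; rewrite /M3 /mx3 mxE /=;
  by congr (A _ _); apply: val_inj.
Qed.

Lemma M3_inj a b c d e f g h i a' b' c' d' e' f' g' h' i' :
  M3 a b c d e f g h i = M3 a' b' c' d' e' f' g' h' i' ->
  a = a' /\ b = b' /\ c = c' /\ d = d' /\ e = e' /\ f = f' /\ g = g' /\ h = h' /\ i = i'.
Proof.
move=> E; have F k l : M3 a b c d e f g h i k l = M3 a' b' c' d' e' f' g' h' i' k l by rewrite E.
by move: (F 0 0) (F 0 1) (F 0 2) (F 1 0) (F 1 1) (F 1 2) (F 2 0) (F 2 1) (F 2 2);
  rewrite /M3 /mx3 !mxE.
Qed.

End ExplicitMatrices.

Section ExponentialSeries.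
Local Open Scope classical_set_scope.
Variables (R : realType) (n : nat).
Implicit Types (A P Q : 'M[R]_n) (d : 'rV[R]_n).

Definition exp_partial A N := \sum_(k < N) (k`!%:R)^-1 *: A ^+ k.

Lemma exp_partial_conj P Q A N : Q *m P = 1%:M ->
  exp_partial (P *m A *m Q) N = P *m exp_partial A N *m Q.
Proof.
move=> QP; have PQ : P *m Q = 1%:M by apply: mulmx1C.
have conjX k : (P *m A *m Q) ^+ k = P *m A ^+ k *m Q.
  elim: k => [|k IH]; first by rewrite !expr0 mulmx1 PQ.
  by rewrite !exprS IH -!mulmxE !mulmxA -(mulmxA _ Q) QP mulmx1.
rewrite /exp_partial mulmx_sumr mulmx_suml; apply: eq_bigr => k _.
by rewrite conjX scalemxAl scalemxAr.
Qed.

Lemma cvg_exp_partial_diag d i j :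
  exp_partial (diag_mx d) N i j @[N --> \oo] --> diag_mx (\row_k expR (d 0 k)) i j.
Proof.
have diagX k : diag_mx d ^+ k = diag_mx (\row_l d 0 l ^+ k).
  elim: k => [|k IH]; first by apply/matrixP => l m; rewrite !mxE expr0.
  by rewrite exprS IH -mulmxE mulmx_diag; congr diag_mx; apply/rowP => l; rewrite !mxE exprS.
rewrite !mxE (_ : (fun N => _) = fun N => series (exp_coeff (d 0 i)) N *+ (i == j)).
  have [->|_] := eqVneq i j; last exact: cvg_cst.
  by apply: cvg_toP; [exact: is_cvg_series_exp_coeff | by []].
apply/funext => N; rewrite /exp_partial summxE /series /= big_mkord -sumrMnl.
by apply: eq_bigr => k _; rewrite diagX !mxE mulrnAr /exp_coeff /= mulrC.
Qed.

Lemma cvg_conj_entries P Q (X : nat -> 'M[R]_n) (L : 'M[R]_n) :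
  (forall k l, X N k l @[N --> \oo] --> L k l) ->
  forall i j, (P *m X N *m Q) i j @[N --> \oo] --> (P *m L *m Q) i j.
Proof.
move=> XL i j; rewrite mxE; under eq_fun do rewrite mxE.
apply: cvg_big => [|l _]; first exact: add_continuous.
apply: cvgMr_tmp; rewrite mxE; under eq_fun do rewrite mxE.
apply: cvg_big => [|k _]; first exact: add_continuous.
by apply: cvgMl_tmp; apply: XL.
Qed.

End ExponentialSeries.

Lemma mexp_conj_diag (R : realType) (P Q : 'M[R]_3) (d : 'rV[R]_3) :
  Q *m P = 1%:M -> mexp (P *m diag_mx d *m Q) = P *m diag_mx (\row_k expR (d 0 k)) *m Q.
Proof.
move=> QP; apply/matrixP => i j; rewrite mxE; apply: cvg_lim => //.
under eq_fun do rewrite -/(exp_partial _ _) exp_partial_conj //.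
exact/cvg_conj_entries/cvg_exp_partial_diag.
Qed.

Section Rotations.
Variable R : realType.
Implicit Types x y : R.

Lemma RotE x : Rot x = M3 1 0 0 0 (cos x) (- sin x) 0 (sin x) (cos x).
Proof. by []. Qed.

Lemma Rot_mul x y : Rot x *m Rot y = Rot (x + y).
Proof. by rewrite !RotE M3_mul cosD sinD; congr M3; ring. Qed.

Lemma Rot0 : Rot 0 = 1%:M :> 'M[R]_3.
Proof. by rewrite RotE cos0 sin0 oppr0 M3_1. Qed.

Lemma RotN_mul x : Rot (- x) *m Rot x = 1%:M.
Proof. by rewrite Rot_mul addNr Rot0. Qed.

Lemma Rot_mulN x : Rot x *m Rot (- x) = 1%:M.
Proof. by rewrite Rot_mul addrN Rot0. Qed.

Lemma tr_Rot x : (Rot x)^T = Rot (- x).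
Proof. by rewrite !RotE tr_M3 cosN sinN opprK. Qed.

Lemma det_Rot x : \det (Rot x) = 1.
Proof. by rewrite RotE det_M3 -[RHS](cos2Dsin2 x); ring. Qed.

Lemma Rot_unit x : Rot x \in unitmx.
Proof. by rewrite unitmxE det_Rot unitr1. Qed.

Lemma cos_2pi3 : cos (2 * pi / 3) = - 1 / 2 :> R.
Proof.
set y := 2 * pi / 3.
have sin_gt0 : 0 < sin y.
  by apply: sin_gt0_pi; have := pi_gt0 R; rewrite /y => ?; apply/andP; split; lra.
have cos3 : cos (y + (y + y)) = 1.
  by rewrite (_ : y + (y + y) = pi *+ 2) ?cos2pi // /y; field.
(* [cos y] is a root of [4 c^3 - 3 c - 1 = (c - 1) (2 c + 1)^2], and [cos y <> 1]. *)
have : (cos y - 1) * (2 * cos y + 1) ^+ 2 = cos (y + (y + y)) - 1.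
  by rewrite !cosD !sinD; ring: (sin2cos2 y).
rewrite cos3 subrr => /eqP; rewrite mulf_eq0 sqrf_eq0 => /orP[|/eqP]; last lra.
rewrite subr_eq0 => /eqP cos1; have := sin2cos2 y.
by rewrite cos1 expr1n subrr; nra.
Qed.

End Rotations.

Section Hyperbolic.
Variable R : realType.
Implicit Types x : R.

Lemma coshR_sqr_sub x : coshR x ^+ 2 - sinhR x ^+ 2 = 1.
Proof. by rewrite /coshR /sinhR -[RHS](expRxMexpNx_1 x); field. Qed.

Lemma expR_double x : expR (2 * x) = expR x ^+ 2.
Proof. by rewrite mulr2n mulrDl mul1r expRD expr2. Qed.

Lemma coshR_double x : coshR (2 * x) = coshR x ^+ 2 + sinhR x ^+ 2.
Proof. by rewrite /coshR /sinhR -mulrN !expR_double; field. Qed.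

Lemma sinhR_double x : sinhR (2 * x) = 2 * coshR x * sinhR x.
Proof. by rewrite /coshR /sinhR -mulrN !expR_double; field. Qed.

End Hyperbolic.

Section NormalForm.
Variable R : realType.
Implicit Types a b c s t x C S : R.

Definition diag3 a b c : 'M[R]_3 := diag_mx (\row_k [:: a; b; c]`_k).

Lemma diag3E a b c : diag3 a b c = M3 a 0 0 0 b 0 0 0 c.
Proof. by apply/matrixP => -[[|[|[|//]]] ?] -[[|[|[|//]]] ?]; rewrite !mxE. Qed.

Lemma diag3_mul a b c a' b' c' :
  diag3 a b c *m diag3 a' b' c' = diag3 (a * a') (b * b') (c * c').
Proof. by rewrite !diag3E M3_mul; congr M3; ring. Qed.

Lemma mexp_conj_diag3 (P Q : 'M[R]_3) a b c : Q *m P = 1%:M ->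
  mexp (P *m diag3 a b c *m Q) = P *m diag3 (expR a) (expR b) (expR c) *m Q.
Proof.
move=> QP; rewrite mexp_conj_diag //; congr (_ *m diag_mx _ *m _).
by apply/rowP => -[[|[|[|//]]] ?]; rewrite !mxE.
Qed.

Definition boost C S : 'M[R]_3 := M3 C S 0 S C 0 0 0 1.

Lemma boost_mul C S C' S' :
  boost C S *m boost C' S' = boost (C * C' + S * S') (C * S' + S * C').
Proof. by rewrite /boost M3_mul; congr M3; ring. Qed.

Lemma tr_boost C S : (boost C S)^T = boost C S.
Proof. by rewrite /boost tr_M3. Qed.

Definition tilted_boost C S x := Rot x *m boost C S *m Rot (- x).

Lemma tilted_boost_mul C S C' S' x : tilted_boost C S x *m tilted_boost C' S' x =
  tilted_boost (C * C' + S * S') (C * S' + S * C') x.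
Proof. by rewrite mulmx_conj ?RotN_mul // boost_mul. Qed.

Lemma tr_tilted_boost C S x : (tilted_boost C S x)^T = tilted_boost C S x.
Proof. by rewrite !trmx_mul tr_boost !tr_Rot opprK mulmxA. Qed.

Definition f1_basis : 'M[R]_3 := M3 1 1 0 1 (-1) 0 0 0 1.
Definition f1_basis_inv : 'M[R]_3 := M3 (1/2) (1/2) 0 (1/2) (-1/2) 0 0 0 1.

Lemma f1_basisK : f1_basis_inv *m f1_basis = 1%:M.
Proof. by rewrite /f1_basis /f1_basis_inv M3_mul M3_1; congr M3; field. Qed.

Lemma f1_scale_diag s : s *: f1 R = f1_basis *m diag3 s (- s) 0 *m f1_basis_inv.
Proof. by rewrite /f1_basis /f1_basis_inv diag3E !M3_mul M3_scale; congr M3; field. Qed.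

Lemma boost_exp s :
  f1_basis *m diag3 (expR s) (expR (- s)) (expR 0) *m f1_basis_inv = boost (coshR s) (sinhR s).
Proof.
by rewrite /f1_basis /f1_basis_inv /boost /coshR /sinhR diag3E !M3_mul expR0; congr M3; field.
Qed.

Lemma mexp_f1 s x :
  mexp (s *: (Rot x *m f1 R *m Rot (- x))) = tilted_boost (coshR s) (sinhR s) x.
Proof.
rewrite scalemxAl scalemxAr f1_scale_diag !mulmxA -(mulmxA _ _ (Rot (- x))).
rewrite mexp_conj_diag3; last first.
  by rewrite mulmxA -(mulmxA f1_basis_inv) RotN_mul mulmx1 f1_basisK.
by rewrite /tilted_boost -boost_exp !mulmxA.
Qed.

Definition Bmat_diag r t := diag3 (expR (2 * r)) (expR (t / 2 - r)) (expR (- r - t / 2)).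

Lemma mexp_p r t x : mexp (r *: p0 R + t *: (Rot x *m p1 R *m Rot (- x))) =
  Rot x *m Bmat_diag r t *m Rot (- x).
Proof.
rewrite -mexp_conj_diag3 ?RotN_mul //; congr mexp.
rewrite (_ : p0 R = M3 2 0 0 0 (-1) 0 0 0 (-1)) // (_ : p1 R = M3 0 0 0 0 2^-1 0 0 0 (- 2^-1)) //.
by rewrite diag3E !RotE !M3_mul !M3_scale M3_add cosN sinN; congr M3; ring: (sin2cos2 x).
Qed.

Lemma Bmat_normal_form r s t al be : Bmat r s t al be =
  Rot (be / 2) *m (Bmat_diag r t *m tilted_boost (coshR s) (sinhR s) (al - be / 2))
  *m Rot (- (be / 2)).
Proof.
have e1 : Rot (- (be / 2)) *m Rot al = Rot (al - be / 2) by rewrite Rot_mul addrC.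
have e2 : Rot (- (al - be / 2)) *m Rot (- (be / 2)) = Rot (- al).
  by rewrite Rot_mul; congr Rot; ring.
by rewrite /Bmat mexp_p mexp_f1 /tilted_boost -e1 -e2 !mulmxA.
Qed.

Lemma tr_diag3 a b c : (diag3 a b c)^T = diag3 a b c.
Proof. exact: tr_diag_mx. Qed.

Lemma gram_conj_Rot x (N : 'M[R]_3) :
  (Rot x *m N *m Rot (- x)) *m (Rot x *m N *m Rot (- x))^T = Rot x *m (N *m N^T) *m Rot (- x).
Proof.
have -> : (Rot x *m N *m Rot (- x))^T = Rot x *m N^T *m Rot (- x).
  by rewrite !trmx_mul !tr_Rot opprK mulmxA.
exact: mulmx_conj (RotN_mul x).
Qed.

Definition Bmat_gram_core r s t x :=
  Bmat_diag r t *m tilted_boost (coshR (2 * s)) (sinhR (2 * s)) x *m Bmat_diag r t.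

Lemma Bmat_gram r s t al be (B := Bmat r s t al be) :
  B *m B^T = Rot (be / 2) *m Bmat_gram_core r s t (al - be / 2) *m Rot (- (be / 2)).
Proof.
rewrite /B /Bmat_gram_core Bmat_normal_form gram_conj_Rot trmx_mul tr_tilted_boost tr_diag3.
set T := tilted_boost (coshR s) (sinhR s) _.
rewrite (mulmxA (_ *m T) T) -(mulmxA _ T T) /T tilted_boost_mul coshR_double sinhR_double.
have CS : coshR s * sinhR s + sinhR s * coshR s = 2 * coshR s * sinhR s by ring.
by rewrite !expr2 CS.
Qed.

End NormalForm.

Section Trace.
Variable R : realType.
Implicit Types a b c w x C S : R.

Lemma tilted_boost_inv C S x : C ^+ 2 - S ^+ 2 = 1 ->
  tilted_boost C S x *m tilted_boost C (- S) x = 1%:M.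
Proof.
move=> hC; rewrite tilted_boost_mul (_ : C * C + S * - S = 1); last by rewrite -hC; ring.
rewrite (_ : C * - S + S * C = 0); last by ring.
by rewrite /tilted_boost /boost -M3_1 mulmx1 Rot_mulN.
Qed.

Lemma diag3_sandwichK a b c C S x : a != 0 -> b != 0 -> c != 0 -> C ^+ 2 - S ^+ 2 = 1 ->
  (diag3 a b c *m tilted_boost C S x *m diag3 a b c) *m
  (diag3 a^-1 b^-1 c^-1 *m tilted_boost C (- S) x *m diag3 a^-1 b^-1 c^-1) = 1%:M.
Proof.
move=> an bn cn hC.
have DD : diag3 a b c *m diag3 a^-1 b^-1 c^-1 = 1%:M.
  by rewrite diag3_mul !mulfV // diag3E M3_1.
have := tilted_boost_inv x hC.
move: (diag3 a b c) (diag3 a^-1 b^-1 c^-1) (tilted_boost C S x) (tilted_boost C (- S) x) DD.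
by move=> D Di T Ti DD TT; rewrite !mulmxA -(mulmxA _ D) DD mulmx1 -(mulmxA _ T) TT mulmx1.
Qed.

Definition baba_trace_poly C y v : R :=
  - (3 / 2) * C * ((y ^+ 2 + y ^- 2) / 2) + 9 / 4 * C ^+ 2 - 3 / 4
  - 3 * v ^+ 2 * ((C - 1) / 2) ^+ 2 * ((y - y^-1) / 2) ^+ 2.

Lemma mxtrace_baba_sandwich w x a1 a2 a3 C S :
  cos w = - 1 / 2 -> a1 != 0 -> a2 != 0 -> a3 != 0 -> C ^+ 2 - S ^+ 2 = 1 ->
  let M := diag3 a1 a2 a3 *m tilted_boost C S x *m diag3 a1 a2 a3 in
  \tr (Rot w *m M *m Rot w *m invmx M) = baba_trace_poly C (a2 / a3) (sin (2 * x)).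
Proof.
move=> cw a1n a2n a3n hC M; rewrite /M (invmx_eq (diag3_sandwichK x a1n a2n a3n hC)).
have sw : (2 * sin w) ^+ 2 = 3 by rewrite exprMn sin2cos2 cw; field.
have hC' : C ^+ 2 = 1 + S ^+ 2 by rewrite -hC; ring.
have s2 : sin (2 * x) = 2 * sin x * cos x by rewrite mulr_natl sin_mulr2n; ring.
rewrite s2 /baba_trace_poly /tilted_boost /boost !RotE !diag3E !M3_mul mxtrace_M3 cw cosN sinN.
(* [field] only takes polynomial side equations, hence [q = 2 sin w] with [q^2 = 3]. *)
rewrite (_ : sin w = (2 * sin w) / 2); last by field.
move: (sin2cos2 x) sw hC'; set c := cos x; set s := sin x; set q := 2 * sin w => hs sw hC'.
clearbody c s q.
field: hs sw hC'.
by rewrite a1n a2n a3n.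
Qed.

End Trace.

Section Isometries.
Variable R : realType.
Implicit Types (A B K M P : 'M[R]_3) (x : R).

Lemma SL3_unit M : SL3 M -> M \in unitmx.
Proof. by rewrite unitmxE => ->; exact: unitr1. Qed.

Lemma mstar_mul A B : A \in unitmx -> B \in unitmx -> mstar (A *m B) = mstar A *m mstar B.
Proof.
move=> Au Bu; rewrite /mstar -trmx_mul; congr trmx; apply: invmx_eq.
by rewrite !mulmxA -(mulmxA A) mulmxV // mulmx1 mulmxV.
Qed.

Lemma mstarK M : M \in unitmx -> mstar (mstar M) = M.
Proof. by move=> Mu; rewrite /mstar trmx_inv trmxK invmxK. Qed.

Lemma mstar_Rot x : mstar (Rot x) = Rot x.
Proof. by rewrite /mstar (invmx_eq (Rot_mulN x)) tr_Rot opprK. Qed.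

Lemma mstar_sym P : P^T = P -> mstar P = invmx P.
Proof. by move=> PT; rewrite /mstar trmx_inv PT. Qed.

Definition baba_mx P := Rot (2 * pi / 3) *m P *m Rot (2 * pi / 3) *m invmx P.

Lemma rho_babaE B M : B *m B^T \in unitmx -> M \in unitmx ->
  rho_baba B M = baba_mx (B *m B^T) *m M.
Proof.
move=> Pu Mu; have PT : (B *m B^T)^T = B *m B^T by rewrite trmx_mul trmxK.
have M'u : mstar M \in unitmx by rewrite unitmx_tr unitmx_inv.
have PM'u : B *m B^T *m mstar M \in unitmx by rewrite unitmx_mul Pu.
rewrite /rho_baba /rho_b /rho_a mstar_mul ?Rot_unit //.
by rewrite mstar_mul // mstarK // mstar_Rot mstar_sym // /baba_mx !mulmxA.
Qed.

Lemma det_baba_mx P : P \in unitmx -> \det (baba_mx P) = 1.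
Proof.
by move=> Pu; rewrite /baba_mx !det_mulmx det_Rot det_inv !mul1r mulr1 mulrV.
Qed.

Lemma SO3_commute_gram_eq1 K : SO3 K ->
  (forall M, SL3 M -> K *m (M *m M^T) = M *m M^T *m K) -> K = 1%:M.
Proof.
move=> [oK dK] central.
(* [diag (2, 1, 1/2)] forces [K] to be diagonal, the two shears force [K] to be scalar. *)
have /central c1 : SL3 (M3 (2 : R) 0 0 0 1 0 0 0 2^-1) by rewrite /SL3 det_M3; field.
have /central c2 : SL3 (M3 (1 : R) 0 0 1 1 0 0 0 1) by rewrite /SL3 det_M3; ring.
have /central c3 : SL3 (M3 (1 : R) 0 0 0 1 0 0 1 1) by rewrite /SL3 det_M3; ring.
rewrite [K]M3E !tr_M3 !M3_mul M3_1 det_M3 in c1 c2 c3 oK dK *.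
move: (K 0 0) (K 0 1) (K 0 2) (K 1 0) (K 1 1) (K 1 2) (K 2 0) (K 2 1) (K 2 2) c1 c2 c3 oK dK.
move=> k00 k01 k02 k10 k11 k12 k20 k21 k22.
case/M3_inj=> c1a [c1b [c1c [c1d [c1e [c1f [c1g [c1h c1i]]]]]]].
have [-> -> ->] : [/\ k01 = 0, k02 = 0 & k10 = 0] by split; lra.
have [-> -> ->] : [/\ k12 = 0, k20 = 0 & k21 = 0] by split; lra.
case/M3_inj=> _ [c2b _]; case/M3_inj=> _ [_ [_ [_ [_ [c3f _]]]]].
have [-> ->] : k11 = k00 /\ k22 = k00 by split; lra.
case/M3_inj=> o1 _ d1.
by have -> : k00 = 1 by nra.
Qed.

Lemma represents_baba_unique B g g0 : g0 \in unitmx ->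
  (forall M, SL3 M -> rho_baba B M = g0 *m M) -> represents_baba B g -> g = g0.
Proof.
move=> g0u rhoE [_ rep].
have intertwine M : SL3 M -> exists K, SO3 K /\ g *m M = g0 *m M *m K.
  by move=> SM; rewrite -rhoE //; apply: rep.
have [K1 [[oK1 dK1] gK1]] := intertwine _ (det1 _ _).
rewrite !mulmx1 in gK1; rewrite gK1 (@SO3_commute_gram_eq1 K1) ?mulmx1 // => M SM.
have [K [[oK _] gK]] := intertwine M SM.
apply: orthogonal_intertwine_comm oK1 oK _.
by move: gK; rewrite gK1 -!mulmxA => /(congr1 (mulmx (invmx g0))); rewrite !mulKmx.
Qed.

Lemma represents_baba_intro B g0 : SL3 g0 ->
  (forall M, SL3 M -> rho_baba B M = g0 *m M) -> represents_baba B g0.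
Proof.
move=> Sg0 rhoE; split=> // M SM; exists 1%:M.
by rewrite /SO3 trmx1 mulmx1 det1 rhoE // mulmx1.
Qed.

End Isometries.

Section BabaTrace.
Variable R : realType.
Implicit Types r s t al be w th : R.

Definition baba_trace s t th : R :=
  - (3 / 2) * coshR (2 * s) * coshR (2 * t)
  + (9 / 4) * coshR (2 * s) ^+ 2 - 3 / 4
  - 3 * sin th ^+ 2 * sinhR s ^+ 4 * sinhR t ^+ 2.

Lemma baba_trace_poly_hyperbolic s t th :
  baba_trace_poly (coshR (2 * s)) (expR t) (sin th) = baba_trace s t th.
Proof.
have cosh2t : coshR (2 * t) = (expR t ^+ 2 + expR t ^- 2) / 2.
  by rewrite /coshR -mulrN !expR_double expRN exprVn.
have sinht : sinhR t = (expR t - (expR t)^-1) / 2 by rewrite /sinhR expRN.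
have sinh4s : sinhR s ^+ 4 = ((coshR (2 * s) - 1) / 2) ^+ 2.
  have cosh2 : coshR s ^+ 2 = 1 + sinhR s ^+ 2 by rewrite -(coshR_sqr_sub s); ring.
  by rewrite coshR_double cosh2; field.
by rewrite /baba_trace_poly /baba_trace cosh2t sinht sinh4s; ring.
Qed.

Lemma Bmat_gram_core_unit r s t x : Bmat_gram_core r s t x \in unitmx.
Proof.
have a_neq0 y : expR y != 0 :> R by rewrite expR_eq0.
have := diag3_sandwichK x (a_neq0 (2 * r)) (a_neq0 (t / 2 - r)) (a_neq0 (- r - t / 2))
  (coshR_sqr_sub (2 * s)).
by case/mulmx1_unit.
Qed.

Lemma Bmat_gram_unit r s t al be (B := Bmat r s t al be) : B *m B^T \in unitmx.
Proof. by rewrite /B Bmat_gram 2!unitmx_mul !Rot_unit Bmat_gram_core_unit. Qed.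

Lemma mxtrace_baba_Bmat w r s t al be (B := Bmat r s t al be) : cos w = - 1 / 2 ->
  \tr (Rot w *m (B *m B^T) *m Rot w *m invmx (B *m B^T)) = baba_trace s t (2 * al - be).
Proof.
move=> cw; rewrite /B Bmat_gram.
have := Bmat_gram_core_unit r s t (al - be / 2).
set M := Bmat_gram_core _ _ _ _ => Mu.
have -> : invmx (Rot (be / 2) *m M *m Rot (- (be / 2))) = Rot (be / 2) *m invmx M *m Rot (- (be / 2)).
  by apply: invmx_eq; rewrite mulmx_conj ?RotN_mul // mulmxV // mulmx1 Rot_mulN.
have Rw : Rot w = Rot (be / 2) *m Rot w *m Rot (- (be / 2)).
  by rewrite !Rot_mul; congr Rot; ring.
rewrite {1 2}Rw !mulmx_conj ?RotN_mul // mxtrace_conj ?RotN_mul //.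
rewrite mxtrace_baba_sandwich ?expR_eq0 ?coshR_sqr_sub // -baba_trace_poly_hyperbolic.
congr baba_trace_poly; first by rewrite -expRB; congr expR; field.
by congr sin; field.
Qed.

End BabaTrace.

Theorem proposition4p5 (R : realType) (s t r al be : R) :
  0 <= s -> 0 <= t ->
  let B := Bmat r s t al be in
  let th := 2 * al - be in
  let E := - (3 / 2) * coshR (2 * s) * coshR (2 * t)
           + (9 / 4) * coshR (2 * s) ^+ 2 - 3 / 4
           - 3 * sin th ^+ 2 * sinhR s ^+ 4 * sinhR t ^+ 2 in
  (exists g, represents_baba B g) /\
  (forall g, represents_baba B g ->
     \tr g = E /\ \tr (invmx g) = E).
Proof.
move=> _ _ B th E.
have Pu : B *m B^T \in unitmx := Bmat_gram_unit r s t al be.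
pose g0 := baba_mx (B *m B^T).
have rhoE M : SL3 M -> rho_baba B M = g0 *m M by move=> /SL3_unit; exact: rho_babaE.
have SLg0 : SL3 g0 := det_baba_mx Pu.
split; first by exists g0; exact: represents_baba_intro.
move=> g /(represents_baba_unique (SL3_unit SLg0) rhoE) ->.
split; first exact: mxtrace_baba_Bmat (cos_2pi3 R).
rewrite (mxtrace_invmx_baba (Rot_mulN _)) //.
by apply: mxtrace_baba_Bmat; rewrite cosN cos_2pi3.
Qed.
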